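(* Let $n \ge 2$ be an integer, let $1 \le \underline{x}_i < \bar{x}_i$ for $i \in \{1,2\}$, and let $\varepsilon \ge 2^{-2^{n-1}}$. Then for every $(x_1,x_2) \in [\underline{x}_1,\bar{x}_1] \times [\underline{x}_2,\bar{x}_2]$, the set of $\varepsilon$-feasible follower's solutions of the lower-level problem $$\max_{y \in \mathbb{R}^{n+2}} \; y_1 - y_n\,(x_1 + x_2 - y_{n+1} - y_{n+2})$$ subject to $y_1 + y_n = \tfrac12$, $y_i^2 \le y_{i+1}$ for $i \in \{1,\dots,n-1\}$, $y_i \ge 0$ for $i \in \{1,\dots,n\}$, $y_{n+1} \in [0,x_1]$, $y_{n+2} \in [-x_2,x_2]$, is not a singleton.
   Context: For $\varepsilon>0$, a point is $\varepsilon$-feasible for this lower-level problem if it satisfies all linear constraints ($y_1+y_n=\tfrac12$, $y_i\ge0$ for $i\le n$, the bounds on $y_{n+1},y_{n+2}$) exactly and satisfies $y_i^2 - y_{i+1} \le \varepsilon$ for all $i \in \{1,\dots,n-1\}$. An $\varepsilon$-feasible follower's solution (for given $x$) is an $\varepsilon$-feasible point that maximizes the lower-level objective over all $\varepsilon$-feasible points. *)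

From HB Require Import structures.
From mathcomp Require Import all_boot all_order all_algebra.
From mathcomp Require Import reals.
Set Implicit Arguments. Unset Strict Implicit. Unset Printing Implicit Defensive.
Import Order.TTheory GRing.Theory Num.Theory.
Local Open Scope ring_scope.

(* A point y in R^(n+2) is a row vector 'rV[R]_(n.+2); the paper's 1-based
   coordinate y_k (1 <= k <= n+2) is [coord y k] = y 0 (k-1). *)
Definition coord (R : realType) (n : nat) (y : 'rV[R]_(n.+2)) (k : nat) : R :=
  y ord0 (inord k.-1).

Definition eps_feasible (R : realType) (n : nat) (x1 x2 eps : R)
    (y : 'rV[R]_(n.+2)) : Prop :=
  [/\ coord y 1 + coord y n = 1 / 2,
      (forall i : nat, (1 <= i <= n)%N -> 0 <= coord y i),
      0 <= coord y n.+1 <= x1,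
      - x2 <= coord y n.+2 <= x2
    & (forall i : nat, (1 <= i <= n.-1)%N ->
          coord y i ^+ 2 - coord y i.+1 <= eps)].

Definition ll_objective (R : realType) (n : nat) (x1 x2 : R)
    (y : 'rV[R]_(n.+2)) : R :=
  coord y 1 - coord y n * (x1 + x2 - coord y n.+1 - coord y n.+2).

Definition eps_follower_solution (R : realType) (n : nat) (x1 x2 eps : R)
    (y : 'rV[R]_(n.+2)) : Prop :=
  @eps_feasible R n x1 x2 eps y /\
  (forall z : 'rV[R]_(n.+2), @eps_feasible R n x1 x2 eps z ->
     @ll_objective R n x1 x2 z <= @ll_objective R n x1 x2 y).

(* Every feasible point has objective at most its first coordinate, which is
   at most 1/2 because y_1 + y_n = 1/2 and y_n >= 0; so any feasible point with
   y_n = 0 is optimal.  The chain y_i = 2^(-2^(i-1)) (i < n), y_n = 0 satisfies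
   y_i^2 = y_(i+1) exactly except at i = n-1, where the violation is
   2^(-2^(n-1)) <= eps, and y_(n+1) is then free in [0, x_1]; taking
   y_(n+1) = 0 and y_(n+1) = x_1 gives two distinct optimal points. *)
From Pilot Require Import Defs.
From HB Require Import structures.
From mathcomp Require Import all_boot all_order all_algebra.
From mathcomp Require Import reals.
From mathcomp Require Import lra zify.
Import Order.TTheory GRing.Theory Num.Theory.
Local Open Scope ring_scope.

(* Unqualified, [coord] would resolve to the basis coordinates of mathcomp's vector.v. *)
Local Notation coord := Defs.coord.

Section FollowerSolutions.

Variables (R : realType) (n : nat) (x1 x2 eps : R).
Hypothesis n_gt0 : (0 < n)%N.

Lemma ll_objective_le_half (z : 'rV[R]_(n.+2)) :
  eps_feasible x1 x2 eps z -> ll_objective x1 x2 z <= 1 / 2.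
Proof.
move=> [sum_eq coord_ge0 /andP[_ zn1_le] /andP[_ zn2_le] _].
have zn_ge0 : 0 <= coord z n by apply: coord_ge0; rewrite n_gt0 leqnn.
have : 0 <= coord z n * (x1 + x2 - coord z n.+1 - coord z n.+2).
  by apply: mulr_ge0 => //; lra.
rewrite /ll_objective; lra.
Qed.

Lemma eps_follower_solution_coord0 (y : 'rV[R]_(n.+2)) :
  eps_feasible x1 x2 eps y -> coord y n = 0 -> eps_follower_solution x1 x2 eps y.
Proof.
move=> y_feas yn0; split=> // z /ll_objective_le_half.
have [sum_eq _ _ _ _] := y_feas.
by rewrite /ll_objective yn0 mul0r subr0 -sum_eq yn0 addr0.
Qed.

End FollowerSolutions.

Definition squaring_chain (R : realType) (n : nat) (a b : R) : 'rV[R]_(n.+2) :=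
  \row_(j < n.+2)
    if (j.+1 < n)%N then 2^-1 ^+ (2 ^ j)
    else if j.+1 == n then 0 else if j.+1 == n.+1 then a else b.
Arguments squaring_chain {R}.

Section SquaringChain.

Variables (R : realType) (n : nat) (a b : R).
Local Notation y := (squaring_chain n a b).

Lemma coord_squaring_chain_lt k : (0 < k < n)%N -> coord y k = 2^-1 ^+ (2 ^ k.-1).
Proof.
case: k => // k /= k_lt.
by rewrite /Defs.coord mxE /= inordK ?k_lt //; lia.
Qed.

Lemma coord_squaring_chain_n : (0 < n)%N -> coord y n = 0.
Proof.
move=> n_gt0; rewrite /Defs.coord mxE /= inordK prednK //; last by lia.
by rewrite ltnn eqxx.
Qed.

Lemma coord_squaring_chain_n1 : coord y n.+1 = a.
Proof. by rewrite /Defs.coord mxE /= inordK // ltnNge leqnSn /= gtn_eqF // eqxx. Qed.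

Lemma coord_squaring_chain_n2 : coord y n.+2 = b.
Proof.
rewrite /Defs.coord mxE /= inordK // ltnNge leqW //=.
by rewrite !gtn_eqF // ltnW.
Qed.

Lemma squaring_chain_eps_feasible x1 x2 eps :
  (2 <= n)%N -> 0 <= a <= x1 -> - x2 <= b <= x2 ->
  (2 : R) ^- (2 ^ n.-1)%N <= eps -> eps_feasible x1 x2 eps y.
Proof.
move=> n_ge2 a_range b_range eps_ge.
have n_gt0 : (0 < n)%N by apply: leq_trans n_ge2.
have pow_ge0 k : 0 <= (2^-1 : R) ^+ k by rewrite exprn_ge0 // invr_ge0.
split; rewrite ?coord_squaring_chain_n1 ?coord_squaring_chain_n2 //.
- by rewrite coord_squaring_chain_lt ?n_ge2 // coord_squaring_chain_n // addr0 div1r.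
- move=> i /andP[i_gt0 i_le]; have [i_lt | i_ge] := ltnP i n.
    by rewrite coord_squaring_chain_lt ?i_gt0.
  have -> : i = n by lia.
  by rewrite coord_squaring_chain_n.
- move=> i /andP[i_gt0 i_le]; have i_lt : (i < n)%N by lia.
  have sq_eq : coord y i ^+ 2 = 2^-1 ^+ (2 ^ i).
    by rewrite coord_squaring_chain_lt ?i_gt0 // -exprM -expnSr prednK.
  have [i1_lt | i1_ge] := ltnP i.+1 n.
    by rewrite sq_eq coord_squaring_chain_lt ?i1_lt //= subrr (le_trans _ eps_ge) // -exprVn.
  have i_eq : i = n.-1 by lia.
  have -> : i.+1 = n by lia.
  by rewrite coord_squaring_chain_n // subr0 sq_eq exprVn i_eq.
Qed.

End SquaringChain.

Theorem mainTheorem5 (R : realType) (n : nat) (xl1 xu1 xl2 xu2 eps : R) :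
  (2 <= n)%N ->
  1 <= xl1 -> xl1 < xu1 ->
  1 <= xl2 -> xl2 < xu2 ->
  (2 : R) ^- (2 ^ n.-1)%N <= eps ->
  forall x1 x2 : R, xl1 <= x1 <= xu1 -> xl2 <= x2 <= xu2 ->
    ~ (exists y0 : 'rV[R]_(n.+2),
         forall y : 'rV[R]_(n.+2),
           @eps_follower_solution R n x1 x2 eps y <-> y = y0).
Proof.
move=> n_ge2 xl1_ge1 _ xl2_ge1 _ eps_ge x1 x2 /andP[x1_ge _] /andP[x2_ge _] [y0 unique].
have n_gt0 : (0 < n)%N by apply: leq_trans n_ge2.
have optimal a : 0 <= a <= x1 -> squaring_chain n a x2 = y0.
  move=> a_range; apply/unique/eps_follower_solution_coord0 => //.
    by apply: squaring_chain_eps_feasible => //; apply/andP; split; lra.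
  exact: coord_squaring_chain_n.
have chain0 : squaring_chain n 0 x2 = y0 by apply: optimal; apply/andP; split; lra.
have chain1 : squaring_chain n x1 x2 = y0 by apply: optimal; apply/andP; split; lra.
have : coord (squaring_chain n x1 x2) n.+1 = coord (squaring_chain n 0 x2) n.+1.
  by rewrite chain0 chain1.
rewrite !coord_squaring_chain_n1; lra.
Qed.
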